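(* Let $(r,s)\in\{0,\dots,m\}\times\{1,\dots,n\}$ and let $\mathcal{S}$ be an $(r,s)$-decomposed subspace of $\mathrm{Mat}_{m,n}(\mathbb{K})$ with the column property. Then the lower space of $\mathcal{S}$ has the column property.
   Context: Matrix spaces are equivalent ($\sim$) if $\mathcal{M}=P\mathcal{M}'Q$ with $P,Q$ invertible. A subspace is defective if none of its matrices has rank equal to its number of columns. $\mathcal{S}\subseteq\mathrm{Mat}_{m,n}(\mathbb{K})$ is $(r,s)$-decomposed ($0\le r\le m$, $1\le s\le n$) if every $M\in\mathcal{S}$ is of the form $\begin{bmatrix} ?_{r\times s}& C(M)\\ B(M)&0_{(m-r)\times(n-s)}\end{bmatrix}$ with $B(M)\in\mathrm{Mat}_{m-r,s}(\mathbb{K})$; its lower space is $B(\mathcal{S})$. $\mathcal{S}$ has the column property if for every such $(r,s)$ and every $(r,s)$-decomposed $\mathcal{S}'\sim\mathcal{S}$, the lower space of $\mathcal{S}'$ is defective. *)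

From HB Require Import structures.
From mathcomp Require Import all_boot all_order all_algebra.
Set Implicit Arguments.
 Unset Strict Implicit. Unset Printing Implicit Defensive.
Import Order.TTheory GRing.Theory Num.Theory.
Local Open Scope ring_scope.

Definition mxset (K : fieldType) (m n : nat) := 'M[K]_(m, n) -> Prop.

Definition is_subspace (K : fieldType) (m n : nat) (S : mxset K m n) : Prop :=
  S 0 /\ forall (a : K) (A B : 'M[K]_(m, n)), S A -> S B -> S (a *: A + B).

Definition mx_equiv (K : fieldType) (m n : nat) (S S' : mxset K m n) : Prop :=
  exists (P : 'M[K]_m) (Q : 'M[K]_n),
    P \in unitmx /\ Q \in unitmx /\
    forall A : 'M[K]_(m, n), S A <-> exists2 A' : 'M[K]_(m, n), S' A' & A = P *m A' *m Q.

Definition defective (K : fieldType) (m n : nat) (S : mxset K m n) : Prop :=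
  forall A, S A -> \rank A <> n.

Definition decomposed (K : fieldType) (m n : nat) (r s : nat) (S : mxset K m n) : Prop :=
  forall A, S A -> forall (i : 'I_m) (j : 'I_n), (r <= i)%N -> (s <= j)%N -> A i j = 0.

(* Lower space B(S) in Mat_{m-r,s}: B(M) is rows r..m-1, columns 0..s-1 of M. *)
Definition lower_space (K : fieldType) (m n : nat) (r s : nat) (S : mxset K m n)
  : mxset K (m - r) s :=
  fun B => exists2 A, S A &
    forall (i : 'I_(m - r)) (j : 'I_s) (i' : 'I_m) (j' : 'I_n),
      nat_of_ord i' = (r + i)%N -> nat_of_ord j' = nat_of_ord j -> B i j = A i' j'.

Arguments lower_space {K m n} r s S _.
Arguments decomposed {K m n} r s S.

Definition column_property (K : fieldType) (m n : nat) (S : mxset K m n) : Prop :=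
  forall (r s : nat), (r <= m)%N -> (1 <= s <= n)%N ->
  forall S' : mxset K m n, mx_equiv S' S -> decomposed r s S' ->
    defective (lower_space r s S').

From HB Require Import structures.
From mathcomp Require Import all_boot all_order all_algebra.
Set Implicit Arguments.
Unset Strict Implicit.
Import GRing.Theory.
Local Open Scope ring_scope.

(* Write m = r + k and n = s + l, so that every matrix of S has
   the block form [a b; c 0] with lower space B(S) = { c }.  Let L' be a space
   equivalent to B(S), say L' = P B(S) Q, which is (r',s')-decomposed, and let
   C be a matrix of its lower space, cut out of some B = P c Q in L'.  Conjugating
   S by the invertible block-diagonal matrices diag(1, P) and diag(Q, 1) gives a
   space S' ~ S whose elements are [a Q  b; P c Q  0].  Since P c Q vanishes below
   row r' and right of column s', S' is (r + r', s')-decomposed, and its lower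
   space at (r + r', s') contains (a reindexing of) C.  The column property of S
   then says that C does not have full column rank. *)

Definition lower_block (K : fieldType) (r k s l : nat)
    (S : mxset K (r + k) (s + l)) : mxset K k s :=
  fun B => exists2 A, S A & B = dlsubmx A.

Definition mx_image (K : fieldType) (m n : nat) (P : 'M[K]_m) (Q : 'M[K]_n)
    (S : mxset K m n) : mxset K m n :=
  fun X => exists2 A, S A & X = P *m A *m Q.

Lemma column_property_ext (K : fieldType) (m n : nat) (S1 S2 : mxset K m n) :
  (forall A, S1 A <-> S2 A) -> column_property S1 -> column_property S2.
Proof.
move=> eqS colS1 r s hr hs S' [P [Q [uP [uQ defS']]]]; apply: colS1 => //.
exists P, Q; do 2!split=> //; move=> A; split=> [/defS' [B /eqS] | [B /eqS]].
  by exists B.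
by move=> S1B defA; apply/defS'; exists B.
Qed.

Lemma lower_blockE (K : fieldType) (r k s l : nat)
    (S : mxset K (r + k) (s + l)) (B : 'M[K]_(k, s)) :
  lower_block S B <->
  (exists2 A, S A & forall (i : 'I_k) (j : 'I_s) (i' : 'I_(r + k))
     (j' : 'I_(s + l)), i' = (r + i)%N :> nat -> j' = j :> nat -> B i j = A i' j').
Proof.
split=> -[A SA defB]; exists A => //.
  by move=> i j i' j' ei ej; rewrite defB !mxE; congr (A _ _); apply: val_inj.
by apply/matrixP => i j; rewrite !mxE; apply: defB.
Qed.

Lemma decomposed_drsubmx (K : fieldType) (r k s l : nat)
    (S : mxset K (r + k) (s + l)) (A : 'M[K]_(r + k, s + l)) :
  decomposed r s S -> S A -> drsubmx A = 0.
Proof.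
by move=> decS SA; apply/matrixP => i j; rewrite !mxE; apply: decS;
  rewrite /= ?leq_addr.
Qed.

Lemma mulmx_block_diag (K : fieldType) (r k s l : nat) (P : 'M[K]_k)
    (Q : 'M[K]_s) (A : 'M[K]_(r + k, s + l)) :
  drsubmx A = 0 ->
  block_mx 1%:M 0 0 P *m A *m block_mx Q 0 0 1%:M
  = block_mx (ulsubmx A *m Q) (ursubmx A) (P *m dlsubmx A *m Q) 0.
Proof.
move=> A_dr0; rewrite -[in LHS](submxK A) A_dr0 !mulmx_block.
by rewrite !(mul1mx, mul0mx, mulmx0, add0r, addr0, mulmx1).
Qed.

Lemma block_mx_corner0 (K : fieldType) (r k s l r' s' : nat)
    (a : 'M[K]_(r, s)) (b : 'M[K]_(r, l)) (c : 'M[K]_(k, s)) :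
  (s' <= s)%N ->
  (forall (i : 'I_k) (j : 'I_s), (r' <= i)%N -> (s' <= j)%N -> c i j = 0) ->
  forall (i : 'I_(r + k)) (j : 'I_(s + l)), (r + r' <= i)%N -> (s' <= j)%N ->
    block_mx a b c (0 : 'M_(k, l)) i j = 0.
Proof.
move=> le_s's c0 i j hi hj.
have le_ri : (r <= i)%N by apply: leq_trans (leq_addr _ _) hi.
rewrite -(splitK i) -(splitK j); case: splitP => [i0 ei | i1 ei].
  by move: le_ri; rewrite ei leqNgt ltn_ord.
case: splitP => [j0 ej | j1 _]; last by rewrite block_mxEdr mxE.
rewrite block_mxEdl; apply: c0; rewrite -?ej //.
by rewrite -(leq_add2l r) -ei.
Qed.

Lemma dlsubmx_entry (K : fieldType) (r k s l : nat) (X : 'M[K]_(r + k, s + l))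
    (i : 'I_k) (j : 'I_s) (i' : 'I_(r + k)) (j' : 'I_(s + l)) :
  i' = (r + i)%N :> nat -> j' = j :> nat -> X i' j' = dlsubmx X i j.
Proof. by move=> ei ej; rewrite !mxE; congr (X _ _); apply: val_inj. Qed.

(* The row count of a lower space taken at r + r' inside an (r + k)-row space,
   used to reindex a lower space taken at r' inside k rows. *)
Lemma lower_cast_eq (r k r' : nat) : (r + k - (r + r') = k - r')%N.
Proof. by rewrite subnDl. Qed.

Lemma lower_space_of_dlsubmx (K : fieldType) (r k s l r' s' : nat)
    (S' : mxset K (r + k) (s + l)) (X : 'M[K]_(r + k, s + l))
    (C : 'M[K]_(k - r', s')) :
  (s' <= s)%N -> S' X ->
  (forall (i : 'I_(k - r')) (j : 'I_s') (i' : 'I_k) (j' : 'I_s),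
     i' = (r' + i)%N :> nat -> j' = j :> nat -> C i j = dlsubmx X i' j') ->
  lower_space (r + r') s' S' (castmx (esym (lower_cast_eq r k r'), erefl) C).
Proof.
move=> le_s's S'X defC; exists X => // i j i' j' ei ej; rewrite castmxE /=.
have lt_i : (r' + i < k)%N by rewrite -ltn_subRL -(lower_cast_eq r k r') ltn_ord.
have lt_j : (j < s)%N by apply: leq_trans (ltn_ord j) le_s's.
rewrite (@dlsubmx_entry K r k s l _ (Ordinal lt_i) (Ordinal lt_j)) //=;
  last by rewrite ei addnA.
exact: defC.
Qed.

Lemma lower_block_column_property (K : fieldType) (r k s l : nat)
    (S : mxset K (r + k) (s + l)) :
  decomposed r s S -> column_property S -> column_property (lower_block S).
Proof.
move=> decS colS r' s' le_r'k /andP[s'_gt0 le_s's] L' [P [Q [uP [uQ defL']]]].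
move=> decL' C [B L'B defC].
pose S' := mx_image (block_mx 1%:M 0 0 P) (block_mx Q 0 0 1%:M) S.
have S'E A : S A -> block_mx 1%:M 0 0 P *m A *m block_mx Q 0 0 1%:M
    = block_mx (ulsubmx A *m Q) (ursubmx A) (P *m dlsubmx A *m Q) 0.
  by move=> SA; apply/mulmx_block_diag/(decomposed_drsubmx decS).
have L'_dl A : S A -> L' (P *m dlsubmx A *m Q).
  by move=> SA; apply/defL'; exists (dlsubmx A) => //; exists A.
have equivS' : mx_equiv S' S.
  exists (block_mx 1%:M 0 0 P), (block_mx Q 0 0 1%:M).
  by rewrite !block_diag_mx_unit uP uQ !unitmx1; do 2!split.
have decS' : decomposed (r + r') s' S'.
  move=> X [A SA ->]; rewrite S'E //; apply: block_mx_corner0 => // i j.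
  exact: decL' (L'_dl A SA) i j.
case/defL': L'B defC => _ [A SA ->] -> defC.
have le_rr' : (r + r' <= r + k)%N by rewrite leq_add2l le_r'k.
have s'_range : (0 < s' <= s + l)%N by rewrite s'_gt0 (leq_trans le_s's) ?leq_addr.
rewrite -(eqmx_cast C (esym (lower_cast_eq r k r'), erefl)).
apply: (colS _ _ le_rr' s'_range S' equivS' decS').
apply: (lower_space_of_dlsubmx le_s's (_ : S' _) _); first by exists A.
by rewrite S'E // block_mxKdl.
Qed.

Theorem mainTheorem13 (K : fieldType) (m n r s : nat)
  (S : mxset K m n) (HS : is_subspace S)
  (Hr : (r <= m)%N) (Hs : (1 <= s <= n)%N)
  (Hdec : decomposed r s S) (Hcol : column_property S) :
  column_property (lower_space r s S).
Proof.
case/andP: Hs => _ le_sn; rewrite /lower_space.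
move: (subnKC Hr) (subnKC le_sn); move: (m - r)%N (n - s)%N => k l Em En.
subst m n.
exact: column_property_ext (lower_blockE S) (lower_block_column_property Hdec Hcol).
Qed.
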